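(* Let $p\neq q$ be primes and $m,n$ positive integers. Then the quotient $Q(x)=\mathrm P_{\langle p^m,q^n\rangle}(x)/\Phi_{p^mq^n}(x)$ is a monic polynomial in $\mathbb Z[x]$ with constant coefficient $1$, and its nonzero coefficients alternate between $1$ and $-1$.
   Context: For a numerical semigroup $S$ (submonoid of $(\mathbb N,+)$ with finite complement), $\mathrm P_S(x)=(1-x)\sum_{s\in S}x^s$. $\langle a,b\rangle$ is the submonoid generated by $a,b$. $\Phi_N$ denotes the $N$-th cyclotomic polynomial. *)

From mathcomp Require Import all_boot all_order all_algebra all_field.
Set Implicit Arguments. Unset Strict Implicit. Unset Printing Implicit Defensive.
Import GRing.Theory Num.Theory.
Local Open Scope ring_scope.

Definition in_sg2 (a b k : nat) : bool :=
  [exists i : 'I_k.+1, exists j : 'I_k.+1, k == (i * a + j * b)%N].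

(* Coefficient of x^k in (1 - x) * sum_{s in S} x^s, S = <a,b>. *)
Definition sgP_coef (a b k : nat) : int :=
  (in_sg2 a b k)%:Z - (if k is k'.+1 then (in_sg2 a b k')%:Z else 0).

(* For coprime a, b >= 1 every k with
   k >= (a-1)(b-1) lies in <a,b>, so sgP_coef a b k = 0 for k > (a-1)(b-1);
   hence truncating at degree < a*b+1 loses nothing. *)
Definition sgP (a b : nat) : {poly int} := \poly_(k < (a * b).+1) sgP_coef a b k.

From mathcomp Require Import all_boot all_order all_algebra all_field.
From mathcomp Require Import ring zify.
Set Implicit Arguments. Unset Strict Implicit. Unset Printing Implicit Defensive.
Import GRing.Theory Num.Theory.
Local Open Scope ring_scope.

(* For a numerical semigroup S and a nonzero a in S, the Apery set
   Ap = {s in S | s - a not in S} is a complete residue system modulo a and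
   S = Ap + aN, so P_S(x) (x^a - 1) = (x - 1) sum_{w in Ap} x^w.  For S = <a, b>
   one has Ap = {j b | j < a}, whence P_S (x^a - 1)(x^b - 1) = (x - 1)(x^(ab) - 1).
   With a = p^m = a' p and b = q^n = b' q, the residue system
   {i b + j a'b' | i < a', j < p} modulo a (the Apery set of <a, b, a'b'>)
   gives in the same way a polynomial Q with
   Q (x^a - 1)(x^b - 1)(x^(a'b') - 1) = (x - 1)(x^(a'b) - 1)(x^(ab') - 1).
   Sorting the divisors of ab into those of a'b and of ab' shows
   Phi_(ab) (x^(a'b) - 1)(x^(ab') - 1) = (x^(ab) - 1)(x^(a'b') - 1), so
   P_S = Q Phi_(ab).  Like any such polynomial, Q has as coefficients the jumps
   of an indicator function of N, hence nonzero coefficients alternating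
   between 1 and -1. *)

Lemma geom_sum_exprM (R : nzRingType) (x : R) (c k : nat) :
  (\sum_(i < k) x ^+ (i * c)) * (x ^+ c - 1) = x ^+ (k * c) - 1.
Proof.
elim: k => [|k IHk]; first by rewrite big_ord0 mul0r mul0n expr0 subrr.
rewrite big_ord_recr /= mulrDl IHk mulrBr mulr1 -exprD mulSn addnC.
by rewrite addrC addrA subrK.
Qed.

Lemma big_predU (R : Type) (idx : R) (op : Monoid.com_law idx)
    (I : Type) (r : seq I) (P Q : pred I) (F : I -> R) :
  op (\big[op/idx]_(i <- r | P i) F i) (\big[op/idx]_(i <- r | Q i) F i) =
  op (\big[op/idx]_(i <- r | P i || Q i) F i) (\big[op/idx]_(i <- r | P i && Q i) F i).
Proof.
rewrite (bigID Q (fun i => P i || Q i)) (bigID Q P) /=.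
have -> : \big[op/idx]_(i <- r | (P i || Q i) && Q i) F i = \big[op/idx]_(i <- r | Q i) F i.
  by apply: eq_bigl => i; case: (P i); case: (Q i).
have -> : \big[op/idx]_(i <- r | (P i || Q i) && ~~ Q i) F i =
          \big[op/idx]_(i <- r | P i && ~~ Q i) F i.
  by apply: eq_bigl => i; case: (P i); case: (Q i).
by rewrite -Monoid.mulmA [RHS]Monoid.mulmC; congr (op _ _); exact: Monoid.mulmC.
Qed.

Lemma big_divisors_dvdn (R : Type) (idx : R) (op : Monoid.com_law idx)
    (F : nat -> R) (M N : nat) : (0 < N)%N -> (M %| N)%N ->
  \big[op/idx]_(d <- divisors M) F d = \big[op/idx]_(d <- divisors N | (d %| M)%N) F d.
Proof.
move=> N_gt0 MN; have M_gt0 : (0 < M)%N := dvdn_gt0 N_gt0 MN.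
rewrite -[RHS]big_filter; apply: perm_big; apply: uniq_perm;
  rewrite ?filter_uniq ?divisors_uniq //.
move=> d; rewrite mem_filter -!dvdn_divisors //.
by apply/idP/andP => [dM | [] //]; rewrite dM (dvdn_trans dM MN).
Qed.

Section Divisors.
Local Open Scope nat_scope.

Lemma dvdn_proper_div_prime (N d : nat) : 0 < N -> d %| N -> d != N ->
  exists2 r, r \in primes N & d %| N %/ r.
Proof.
move=> N_gt0 dN d_neqN; set k := N %/ d.
have d_gt0 : 0 < d := dvdn_gt0 N_gt0 dN.
have Nk : N = k * d by rewrite divnK.
have k_gt1 : 1 < k.
  rewrite ltn_neqAle lt0n; apply/andP; split.
    by apply: contraNneq d_neqN => k1; rewrite Nk -k1 mul1n.
  by apply: contraTneq N_gt0 => k0; rewrite Nk k0.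
exists (pdiv k).
  by rewrite mem_primes pdiv_prime // N_gt0 Nk dvdn_mulr ?pdiv_dvd.
by rewrite Nk -divn_mulAC ?pdiv_dvd ?dvdn_mull.
Qed.

Variables (p q k : nat).
Hypotheses (p_pr : prime p) (q_pr : prime q) (p_neq_q : p != q).

Lemma dvdn_qk_pk d : (d %| q * k) && (d %| p * k) = (d %| k).
Proof.
have cop_qp : coprime q p by rewrite prime_coprime // dvdn_prime2 // eq_sym.
by rewrite -dvdn_gcd -muln_gcdl (eqP cop_qp) mul1n.
Qed.

Hypothesis primes_k : forall r, prime r -> r %| k -> (r == p) || (r == q).

Lemma dvdn_pqk_proper d : 0 < k -> d %| p * q * k -> d != p * q * k ->
  (d %| q * k) || (d %| p * k).
Proof.
move=> k_gt0 dN d_neqN.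
have N_gt0 : 0 < p * q * k by rewrite !muln_gt0 (prime_gt0 p_pr) (prime_gt0 q_pr) k_gt0.
have [r] := dvdn_proper_div_prime N_gt0 dN d_neqN.
rewrite mem_primes => /and3P[r_pr _ rN].
have /orP[/eqP r_p | /eqP r_q] : (r == p) || (r == q).
  move: rN; rewrite !Euclid_dvdM // (dvdn_prime2 r_pr p_pr) (dvdn_prime2 r_pr q_pr).
  case/orP=> [/orP[] -> | rk]; rewrite ?orbT //; exact: primes_k.
- by rewrite r_p -mulnA (mulKn _ (prime_gt0 p_pr)) // => ->.
- by rewrite r_q mulnAC (mulnK _ (prime_gt0 q_pr)) // => ->; rewrite orbT.
Qed.

End Divisors.

Lemma Cyclotomic_pqk (p q k : nat) :
  prime p -> prime q -> p != q -> (0 < k)%N ->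
  (forall r, prime r -> (r %| k)%N -> (r == p) || (r == q)) ->
  'Phi_(p * q * k) * ('X^(q * k) - 1) * ('X^(p * k) - 1) =
  ('X^(p * q * k) - 1) * ('X^k - 1).
Proof.
move=> p_pr q_pr p_neq_q k_gt0 primes_k.
have [p_gt1 q_gt1] := (prime_gt1 p_pr, prime_gt1 q_pr).
set N := (p * q * k)%N.
have N_gt0 : (0 < N)%N by rewrite !muln_gt0 k_gt0 (ltnW p_gt1) (ltnW q_gt1).
have qk_ltN : (q * k < N)%N by rewrite /N -mulnA ltn_Pmull // muln_gt0 k_gt0 (ltnW q_gt1).
have pk_ltN : (p * k < N)%N by rewrite /N mulnAC ltn_Pmulr // muln_gt0 k_gt0 (ltnW p_gt1).
have XnE M : (M %| N)%N -> 'X^M - 1 = \prod_(d <- divisors N | (d %| M)%N) 'Phi_d.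
  by move=> MN; rewrite -big_divisors_dvdn // prod_Cyclotomic // (dvdn_gt0 N_gt0 MN).
have qkN : (q * k %| N)%N by rewrite /N -mulnA dvdn_mull.
have pkN : (p * k %| N)%N by rewrite /N mulnAC dvdn_mulr.
have kN : (k %| N)%N by rewrite dvdn_mull.
rewrite -(prod_Cyclotomic N_gt0) (bigD1_seq N) ?divisors_id ?divisors_uniq //=.
rewrite !XnE // -!mulrA big_predU; congr (_ * (_ * _)); last first.
  by apply: eq_bigl => d; rewrite dvdn_qk_pk.
rewrite big_seq_cond [RHS]big_seq_cond; apply: eq_bigl => d.
rewrite -dvdn_divisors //; case dN: (d %| N)%N => //=.
apply/idP/idP; last exact: dvdn_pqk_proper.
by case/orP=> dM;
  rewrite neq_ltn (leq_ltn_trans (dvdn_leq _ dM)) ?muln_gt0 ?k_gt0 ?prime_gt0.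
Qed.

Definition bdiff (t : nat -> bool) (N : nat) : int :=
  (t N)%:Z - (if N is N'.+1 then (t N')%:Z else 0).

Lemma eq_bdiff t t' : t =1 t' -> bdiff t =1 bdiff t'.
Proof. by move=> tt' [|N]; rewrite /bdiff !tt'. Qed.

Lemma bdiff_eq0 t N : bdiff t N.+1 = 0 -> t N.+1 = t N.
Proof. by rewrite /bdiff; case: (t N.+1); case: (t N). Qed.

Lemma bdiff_sign t N : bdiff t N != 0 -> bdiff t N = 1 \/ bdiff t N = -1.
Proof.
rewrite /bdiff; case: N => [|N]; [case: (t 0) | case: (t N.+1); case: (t N)] => // _;
  by [left | right].
Qed.

Lemma bdiff_alternate t i j : (i < j)%N -> bdiff t i != 0 -> bdiff t j != 0 ->
  (forall k, (i < k < j)%N -> bdiff t k = 0) -> bdiff t j = - bdiff t i.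
Proof.
case: j => [//|j] lt_ij ti tj flat_ij.
have t_flat k : (i <= k <= j)%N -> t k = t i.
  elim: k => [|k IHk] /andP[ik kj]; first by move: ik; rewrite leqn0 => /eqP->.
  case: (eqVneq i k.+1) => [-> // | ne_ik].
  have lt_ik : (i < k.+1)%N by rewrite ltn_neqAle ne_ik ik.
  by rewrite bdiff_eq0 ?flat_ij ?lt_ik // IHk // -ltnS lt_ik ltnW.
move: ti tj; rewrite /bdiff (t_flat j); last by rewrite leqnn andbT -ltnS.
by case: i {lt_ij flat_ij t_flat} => [|i]; do 3?case: (t _).
Qed.

Lemma leq_eqmodE (u N a : nat) : (0 < a)%N -> u = N %[mod a] ->
  (u <= N)%N = (u == N) || ((a <= N)%N && (u <= N - a)%N).
Proof.
move=> a_gt0 uN; case: (ltngtP u N) => [lt_uN | gt_uN | ->] /=; [|lia|by []].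
have : (a <= N - u)%N.
  by apply: dvdn_leq; [lia | rewrite -eqn_mod_dvd ?(ltnW lt_uN) // uN].
lia.
Qed.

Section AperyResidues.
Variables (T : finType) (a : nat) (e : T -> nat).
Hypotheses (a_gt0 : (0 < a)%N) (card_T : #|T| = a).
Hypothesis e_inj_mod : forall x y, e x = e y %[mod a] -> x = y.

Definition apery_hit N := [exists x, e x == N].
(* When e enumerates the Apery set of a numerical semigroup S with respect to
   a, [apery_mem N] says that N belongs to S. *)
Definition apery_mem N := [exists x, (e x <= N)%N && (e x == N %[mod a])].
Definition apery_poly : {poly int} := \poly_(N < (\max_x e x).+1) bdiff apery_mem N.

Lemma apery_residue N : exists x, e x = N %[mod a].
Proof.
pose r x : 'I_a := Ordinal (ltn_pmod (e x) a_gt0).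
have r_inj : injective r by move=> x y /(congr1 val) /e_inj_mod.
have := inj_card_onto r_inj _ (Ordinal (ltn_pmod N a_gt0)).
rewrite card_ord card_T leqnn => /(_ isT) /codomP [x /(congr1 val) /= Nx].
by exists x.
Qed.

Lemma apery_hit_rep N x : e x = N %[mod a] -> apery_hit N = (e x == N).
Proof.
move=> ex; apply/existsP/eqP => [[y /eqP ey] | <-]; last by exists x.
by rewrite -ey (@e_inj_mod y x) // ey ex.
Qed.

Lemma apery_mem_rep N x : e x = N %[mod a] -> apery_mem N = (e x <= N)%N.
Proof.
move=> ex; apply/existsP/idP => [[y /andP[le_y /eqP ey]] | le_x]; last first.
  by exists x; rewrite le_x /= ex.
by rewrite -(@e_inj_mod y x) // ey ex.
Qed.

Lemma apery_mem_ge N : (\max_x e x <= N)%N -> apery_mem N.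
Proof.
move=> maxN; have [x ex] := apery_residue N.
by rewrite (apery_mem_rep ex) (leq_trans (leq_bigmax x)).
Qed.

Lemma apery_memE N :
  (apery_mem N)%:Z = (apery_hit N)%:Z + ((a <= N)%N && apery_mem (N - a))%:Z.
Proof.
have [x ex] := apery_residue N.
have -> : ((a <= N)%N && apery_mem (N - a)) = ((a <= N)%N && (e x <= N - a)%N).
  case: leqP => //= aN; apply: apery_mem_rep.
  by rewrite ex -[in LHS](subnK aN) modnDr.
rewrite (apery_mem_rep ex) (apery_hit_rep ex) (leq_eqmodE a_gt0 ex).
case: eqP => [-> | _]; last by case: (_ && _).
by rewrite (_ : (_ && _) = false) //; lia.
Qed.

Lemma coef_apery_sum N : (\sum_x 'X^(e x) : {poly int})`_N = (apery_hit N)%:Z.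
Proof.
have [x ex] := apery_residue N; rewrite (apery_hit_rep ex) coef_sum.
rewrite (bigD1 x) //= coefXn natz eq_sym big1 ?addr0 // => y neq_yx; rewrite coefXn.
by case: eqP => // ey; case/eqP: neq_yx; apply: e_inj_mod; rewrite -ey ex.
Qed.

Lemma bdiff_apery_mem_gt N : (\max_x e x < N)%N -> bdiff apery_mem N = 0.
Proof.
case: N => // N; rewrite ltnS => maxN.
by rewrite /bdiff !apery_mem_ge ?subrr // (leq_trans maxN).
Qed.

Lemma coef_apery_poly N : apery_poly`_N = bdiff apery_mem N.
Proof. by rewrite coef_poly; case: ltnP => // maxN; rewrite bdiff_apery_mem_gt. Qed.

Lemma apery_poly_mul : apery_poly * ('X^a - 1) = ('X - 1) * \sum_x 'X^(e x).
Proof.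
apply/polyP => N; rewrite mulrBr mulrBl mulr1 mul1r !coefB coefMXn coefXM.
rewrite !coef_apery_sum !coef_apery_poly /bdiff.
case: N => [|N]; first by rewrite a_gt0 apery_memE leqNgt a_gt0 addr0 subr0.
rewrite /= (apery_memE N.+1) (apery_memE N).
case: (ltngtP N.+1 a) => [lt_Na | lt_aN | <-].
- by rewrite (_ : (a <= N)%N = false) /=; [ring | lia].
- by rewrite (_ : (a <= N)%N = true) ?subSn //=; ring.
- by rewrite subnn ltnn /=; ring.
Qed.

Lemma apery_sum_monic : \sum_x 'X^(e x) \is @monic int.
Proof.
have T_gt0 : (0 < #|T|)%N by rewrite card_T.
have [x0 max_x0] := eq_bigmax e T_gt0.
rewrite (bigD1 x0) //=; apply/monicP; rewrite lead_coefDl ?lead_coefXn //.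
rewrite size_polyXn ltnS -max_x0; apply: leq_trans (size_sum _ _ _) _.
apply/bigmax_leqP => y neq_yx0; rewrite size_polyXn ltn_neqAle leq_bigmax andbT.
by apply: contra neq_yx0 => /eqP ey; apply/eqP/e_inj_mod; rewrite ey max_x0.
Qed.

Lemma apery_poly_monic : apery_poly \is monic.
Proof.
have X1_monic : 'X - 1 \is @monic int by rewrite -polyC1 monicXsubC.
apply/monicP; rewrite -(lead_coef_Mmonic _ (monic_Xn_sub_1 _ a_gt0)).
by rewrite apery_poly_mul lead_coef_monicM //; apply/monicP/apery_sum_monic.
Qed.

Lemma apery_poly_coef_sign i :
  apery_poly`_i != 0 -> apery_poly`_i = 1 \/ apery_poly`_i = -1.
Proof. by rewrite coef_apery_poly; apply: bdiff_sign. Qed.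

Lemma apery_poly_coef_alternate i j : (i < j)%N ->
  apery_poly`_i != 0 -> apery_poly`_j != 0 ->
  (forall k, (i < k < j)%N -> apery_poly`_k = 0) -> apery_poly`_j = - apery_poly`_i.
Proof.
rewrite !coef_apery_poly => lt_ij nz_i nz_j flat_ij; apply: bdiff_alternate => // k ik.
by rewrite -coef_apery_poly flat_ij.
Qed.

End AperyResidues.

Lemma eqn_modMr_coprime (c d x y : nat) : coprime d c ->
  (x * c == y * c %[mod d]) = (x == y %[mod d]).
Proof.
move=> cop_dc; wlog le_yx : x y / (y <= x)%N.
  move=> IH; case: (leqP y x) => [/IH // | /ltnW /IH].
  by rewrite eq_sym => ->; rewrite eq_sym.
by rewrite !eqn_mod_dvd ?leq_mul2r ?le_yx ?orbT // -mulnBl Gauss_dvdl.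
Qed.

Lemma mul_ord_inj_mod (a b : nat) (x y : 'I_a) : coprime a b ->
  (x * b = y * b %[mod a])%N -> x = y.
Proof.
by move=> cop_ab /eqP; rewrite eqn_modMr_coprime // !modn_small // => /eqP /val_inj.
Qed.

Lemma in_sg2_apery (a b : nat) : (0 < a)%N -> (0 < b)%N ->
  in_sg2 a b =1 apery_mem a (fun j : 'I_a => (j * b)%N).
Proof.
move=> a_gt0 b_gt0 N.
apply/existsP/existsP => [[i /existsP[j /eqP ->]] | [x /andP[le_xN xN]]].
  exists (Ordinal (ltn_pmod j a_gt0)); rewrite /= modnMDl modnMml eqxx andbT.
  exact: leq_trans (leq_mul (leq_mod _ _) (leqnn b)) (leq_addl _ _).
have lt_x : (x < N.+1)%N by rewrite ltnS (leq_trans _ le_xN) // leq_pmulr.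
have lt_i : ((N - x * b) %/ a < N.+1)%N by rewrite ltnS (leq_trans (leq_div _ _)) ?leq_subr.
exists (Ordinal lt_i); apply/existsP; exists (Ordinal lt_x) => /=.
by move: xN; rewrite eq_sym eqn_mod_dvd // => /divnK->; rewrite subnK.
Qed.

Lemma sgP_apery (a b : nat) : (0 < a)%N -> (0 < b)%N -> coprime a b ->
  sgP a b = apery_poly a (fun j : 'I_a => (j * b)%N).
Proof.
move=> a_gt0 b_gt0 cop_ab; have e_inj := mul_ord_inj_mod cop_ab.
apply/polyP => N; rewrite coef_apery_poly ?card_ord // /sgP coef_poly.
case: ltnP => [_ | abN]; first exact: eq_bdiff (in_sg2_apery a_gt0 b_gt0) N.
rewrite bdiff_apery_mem_gt ?card_ord //; apply: leq_ltn_trans abN.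
by apply/bigmax_leqP => j _; rewrite leq_mul2r ltnW ?orbT.
Qed.

Lemma sgP_mul (a b : nat) : (0 < a)%N -> (0 < b)%N -> coprime a b ->
  sgP a b * ('X^a - 1) * ('X^b - 1) = ('X - 1) * ('X^(a * b) - 1).
Proof.
move=> a_gt0 b_gt0 cop_ab.
rewrite sgP_apery //.
rewrite (apery_poly_mul a_gt0 (card_ord a) (fun x y => mul_ord_inj_mod cop_ab)).
by rewrite -mulrA geom_sum_exprM.
Qed.

Lemma pair_ord_inj_mod (a' p b b' : nat) (x y : 'I_a' * 'I_p) :
  coprime a' b -> coprime p b' ->
  (x.1 * b + x.2 * (b' * a') = y.1 * b + y.2 * (b' * a') %[mod a' * p])%N -> x = y.
Proof.
case: x y => [x1 x2] [y1 y2] /= cop1 cop2 exy.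
have a'_gt0 : (0 < a')%N := leq_ltn_trans (leq0n _) (ltn_ord x1).
have x1y1 : x1 = y1.
  apply: (mul_ord_inj_mod cop1); move/(congr1 (modn^~ a')): exy.
  by rewrite !modn_dvdm ?dvdn_mulr // !mulnA -!(addnC (_ * a')) !modnMDl.
move: exy; rewrite x1y1 => /eqP; rewrite eqn_modDl !mulnA [(a' * p)%N]mulnC.
by rewrite -!muln_modl // eqn_pmul2r // => /eqP /(mul_ord_inj_mod cop2) ->.
Qed.

(* When b' divides b and the residues below are distinct modulo a'p, they form
   the Apery set of S = <a'p, b, a'b'> with respect to a'p, and this is P_S. *)
Definition sgP_ci (a' p b b' : nat) : {poly int} :=
  apery_poly (a' * p) (fun x : 'I_a' * 'I_p => (x.1 * b + x.2 * (b' * a'))%N).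

Section CompleteIntersection.
Variables a' p b b' : nat.
Hypotheses (a'_gt0 : (0 < a')%N) (p_gt0 : (0 < p)%N).
Hypotheses (cop_a'b : coprime a' b) (cop_pb' : coprime p b').

Let a_gt0 : (0 < a' * p)%N. Proof. by rewrite muln_gt0 a'_gt0. Qed.
Let card_pairs : #|{: 'I_a' * 'I_p}| = (a' * p)%N.
Proof. by rewrite card_prod !card_ord. Qed.
Let e_inj := fun x y => @pair_ord_inj_mod a' p b b' x y cop_a'b cop_pb'.

Lemma sgP_ci_mul :
  sgP_ci a' p b b' * ('X^(a' * p) - 1) * ('X^b - 1) * ('X^(a' * b') - 1) =
  ('X - 1) * ('X^(a' * b) - 1) * ('X^(a' * p * b') - 1).
Proof.
rewrite /sgP_ci (apery_poly_mul a_gt0 card_pairs e_inj).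
pose S1 : {poly int} := \sum_(i < a') 'X^(i * b).
pose S2 : {poly int} := \sum_(j < p) 'X^(j * (b' * a')).
have -> : \sum_(x : 'I_a' * 'I_p) 'X^(x.1 * b + x.2 * (b' * a')) = S1 * S2 :> {poly int}.
  by rewrite big_distrlr pair_bigA; apply: eq_bigr => -[i j] _; rewrite exprD.
have -> : ('X - 1) * (S1 * S2) * ('X^b - 1) * ('X^(a' * b') - 1) =
          ('X - 1) * ((S1 * ('X^b - 1)) * (S2 * ('X^(b' * a') - 1))).
  by rewrite (mulnC b'); ring.
by rewrite !geom_sum_exprM mulrA (_ : p * (b' * a') = a' * p * b')%N //; ring.
Qed.

Lemma sgP_ci_monic : sgP_ci a' p b b' \is monic.
Proof. exact: apery_poly_monic a_gt0 card_pairs e_inj. Qed.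

Lemma sgP_ci_coef0 : (sgP_ci a' p b b')`_0 = 1.
Proof.
rewrite coef_apery_poly // /bdiff (_ : apery_mem _ _ 0) //.
by apply/existsP; exists (Ordinal a'_gt0, Ordinal p_gt0); rewrite /= !mul0n.
Qed.

Lemma sgP_ci_coef_sign i : let Q := sgP_ci a' p b b' in
  Q`_i != 0 -> Q`_i = 1 \/ Q`_i = -1.
Proof. exact: apery_poly_coef_sign a_gt0 card_pairs e_inj i. Qed.

Lemma sgP_ci_coef_alternate i j : let Q := sgP_ci a' p b b' in
  (i < j)%N -> Q`_i != 0 -> Q`_j != 0 ->
  (forall k, (i < k < j)%N -> Q`_k = 0) -> Q`_j = - Q`_i.
Proof. exact: apery_poly_coef_alternate a_gt0 card_pairs e_inj i j. Qed.

End CompleteIntersection.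

Section TwoPrimePowers.
Variables (p q m n : nat).
Hypotheses (p_pr : prime p) (q_pr : prime q) (p_neq_q : p != q).

Let p_gt0 : (0 < p)%N := prime_gt0 p_pr.
Let q_gt0 : (0 < q)%N := prime_gt0 q_pr.
Let cop_pq k l : coprime (p ^ k) (q ^ l).
Proof. by apply/coprimeXl/coprimeXr; rewrite prime_coprime // dvdn_prime2. Qed.
Let cop_pqn : coprime p (q ^ n).
Proof. by rewrite -(expn1 p) cop_pq. Qed.

Lemma Cyclotomic_pq_pow :
  'Phi_(p ^ m.+1 * q ^ n.+1) * ('X^(p ^ m * q ^ n.+1) - 1) * ('X^(p ^ m.+1 * q ^ n) - 1) =
  ('X^(p ^ m.+1 * q ^ n.+1) - 1) * ('X^(p ^ m * q ^ n) - 1).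
Proof.
rewrite !expnS.
rewrite (_ : p * p ^ m * (q * q ^ n) = p * q * (p ^ m * q ^ n))%N; last by ring.
rewrite (_ : p ^ m * (q * q ^ n) = q * (p ^ m * q ^ n))%N; last by ring.
rewrite (_ : p * p ^ m * q ^ n = p * (p ^ m * q ^ n))%N; last by ring.
apply: Cyclotomic_pqk => //; first by rewrite muln_gt0 !expn_gt0 p_gt0 q_gt0.
move=> r r_pr; rewrite Euclid_dvdM // !Euclid_dvdX // !dvdn_prime2 //.
by case/orP=> /andP[-> _]; rewrite ?orbT.
Qed.

Lemma sgP_pq_factor :
  sgP (p ^ m.+1) (q ^ n.+1) =
  sgP_ci (p ^ m) p (q ^ n.+1) (q ^ n) * 'Phi_(p ^ m.+1 * q ^ n.+1).
Proof.
set Q := sgP_ci _ _ _ _.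
have QE : Q * ('X^(p ^ m.+1) - 1) * ('X^(q ^ n.+1) - 1) * ('X^(p ^ m * q ^ n) - 1) =
          ('X - 1) * ('X^(p ^ m * q ^ n.+1) - 1) * ('X^(p ^ m.+1 * q ^ n) - 1).
  by rewrite expnSr sgP_ci_mul ?expn_gt0 ?p_gt0.
have XnB1_neq0 k : (0 < k)%N -> 'X^k - 1 != 0 :> {poly int}.
  by move=> k_gt0; apply/monic_neq0/monic_Xn_sub_1.
have nz : ('X^(p ^ m.+1) - 1) * ('X^(q ^ n.+1) - 1) * ('X^(p ^ m * q ^ n) - 1)
          != 0 :> {poly int}.
  by rewrite !mulf_eq0 !negb_or !XnB1_neq0 // ?muln_gt0 ?expn_gt0 ?p_gt0 ?q_gt0.
apply: (mulIf nz); rewrite !mulrA sgP_mul ?expn_gt0 ?p_gt0 ?q_gt0 //.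
rewrite -[LHS]mulrA -Cyclotomic_pq_pow [Q * _]mulrC -!mulrA; rewrite -!mulrA in QE.
by rewrite QE mulrCA.
Qed.

End TwoPrimePowers.

Theorem theorem4 (p q m n : nat) :
  prime p -> prime q -> p != q -> (0 < m)%N -> (0 < n)%N ->
  exists Q : {poly int},
    [/\ sgP (p ^ m) (q ^ n) = Q * Cyclotomic (p ^ m * q ^ n),
        Q \is monic,
        Q`_0 = 1,
        (forall i, Q`_i != 0 -> Q`_i = 1 \/ Q`_i = -1) &
        (forall i j, (i < j)%N -> Q`_i != 0 -> Q`_j != 0 ->
           (forall k, (i < k < j)%N -> Q`_k = 0) -> Q`_j = - Q`_i)].
Proof.
move=> p_pr q_pr p_neq_q m_gt0 n_gt0.
case: m m_gt0 => // m _; case: n n_gt0 => // n _.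
have p_gt0 := prime_gt0 p_pr.
have pm_gt0 : (0 < p ^ m)%N by rewrite expn_gt0 p_gt0.
have cop_pq : coprime p q by rewrite prime_coprime // dvdn_prime2.
have cop_pmqn : coprime (p ^ m) (q ^ n.+1) by apply/coprimeXl/coprimeXr.
have cop_pqn : coprime p (q ^ n) by apply/coprimeXr.
exists (sgP_ci (p ^ m) p (q ^ n.+1) (q ^ n)); split.
- exact: sgP_pq_factor.
- exact: sgP_ci_monic pm_gt0 p_gt0 cop_pmqn cop_pqn.
- exact: sgP_ci_coef0 pm_gt0 p_gt0 cop_pmqn cop_pqn.
- exact: sgP_ci_coef_sign pm_gt0 p_gt0 cop_pmqn cop_pqn.
- exact: sgP_ci_coef_alternate pm_gt0 p_gt0 cop_pmqn cop_pqn.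
Qed.
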